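(* Let $F$ be a field and let $G,H$ be unital associative $F$-algebras such that $[g_1,g_2,g_3]=0$ for all $g_i\in G$ and $[h_1,h_2,h_3]=0$ for all $h_j\in H$. Let $m',n'\ge 1$ be integers and let $g_i,g'_i\in G$, $h_j,h'_j\in H$. In $G\otimes_F H$ put $v_1=g_1\otimes 1$, $v_i=g_i\otimes h_i$ for $i=2,\dots,2m'-1$, $v_{2m'}=g_{2m'}\otimes 1$, and $w_1=g'_1\otimes 1$, $w_j=g'_j\otimes h'_j$ for $j=2,\dots,2n'+1$. Then \[ [v_1,\dots,v_{2m'}]=[g_1,g_2][g_3,g_4]\cdots[g_{2m'-1},g_{2m'}]\otimes [h_2,h_3][h_4,h_5]\cdots[h_{2m'-2},h_{2m'-1}], \] \[ [w_1,\dots,w_{2n'+1}]=[g'_1,g'_2]\cdots[g'_{2n'-1},g'_{2n'}]\,g'_{2n'+1}\otimes [h'_2,h'_3][h'_4,h'_5]\cdots[h'_{2n'},h'_{2n'+1}], \] where an empty product of commutators equals $1$.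
   Context: Left-normed commutators: $[a_1,a_2]=a_1a_2-a_2a_1$, $[a_1,\dots,a_{n-1},a_n]=[[a_1,\dots,a_{n-1}],a_n]$ for $n\ge 3$. $G\otimes_F H$ is the tensor product algebra with $(g\otimes h)(g'\otimes h')=gg'\otimes hh'$. *)

From HB Require Import structures.
From mathcomp Require Import all_boot all_order all_algebra.
Set Implicit Arguments. Unset Strict Implicit. Unset Printing Implicit Defensive.
Import GRing.Theory.
Local Open Scope ring_scope.

Definition comm (R : pzRingType) (a b : R) : R := a * b - b * a.

Definition lcomm (R : pzRingType) (a : R) (s : seq R) : R := foldl (@comm R) a s.

(* (T, t) is a tensor product algebra G (x)_F H:
   t is F-bilinear, (g (x) h)(g' (x) h') = gg' (x) hh', 1 (x) 1 = 1, and
   (T, t) satisfies the universal property of the tensor product of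
   F-vector spaces (every bilinear map factors uniquely through a linear map). *)
Definition bilinear_map (F : fieldType) (G H : lmodType F) (V : lmodType F)
  (b : G -> H -> V) : Prop :=
  (forall (a : F) (g g' : G) (h : H), b (a *: g + g') h = a *: b g h + b g' h) /\
  (forall (a : F) (g : G) (h h' : H), b g (a *: h + h') = a *: b g h + b g h').

Definition linear_map (F : fieldType) (U V : lmodType F) (f : U -> V) : Prop :=
  forall (a : F) (x y : U), f (a *: x + y) = a *: f x + f y.

Definition is_tensor_algebra (F : fieldType) (G H T : algType F)
  (t : G -> H -> T) : Prop :=
  [/\ bilinear_map t,
      (forall g g' h h', t g h * t g' h' = t (g * g') (h * h')),
      t 1 1 = 1 &
      (forall (V : lmodType F) (b : G -> H -> V), bilinear_map b ->
         (exists f : T -> V, linear_map f /\ forall g h, f (t g h) = b g h) /\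
         (forall f1 f2 : T -> V, linear_map f1 -> linear_map f2 ->
            (forall g h, f1 (t g h) = f2 (t g h)) -> forall x, f1 x = f2 x))].

From HB Require Import structures.
From mathcomp Require Import all_boot all_order all_algebra.
From mathcomp Require Import zify.
Set Implicit Arguments. Unset Strict Implicit. Unset Printing Implicit Defensive.
Import GRing.Theory.
Local Open Scope ring_scope.

(* The identities [[a,b],c] = 0 say that commutators are central.  Hence, for
   x (x) y and a (x) b with y and b commuting, the bracket is [x,a] (x) yb, and
   symmetrically in the second factor.  Along the left-normed bracket the first
   factor therefore alternates between C and C g, the second between D h and D,
   with C, D central products of commutators: each new element contributes a
   commutator on exactly one side of the tensor sign. *)

Lemma iota_rcons (m n : nat) : iota m n.+1 = rcons (iota m n) (m + n)%N.
Proof. by rewrite -addn1 iotaD cats1. Qed.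

Lemma lcomm_rcons (R : pzRingType) (a x : R) (s : seq R) :
  lcomm a (rcons s x) = comm (lcomm a s) x.
Proof. exact: foldl_rcons. Qed.

Lemma comm_central_of_lcomm2 (R : pzRingType) :
  (forall a b c : R, lcomm a [:: b; c] = 0) ->
  forall a b c : R, GRing.comm (comm a b) c.
Proof. by move=> h3 a b c; apply/eqP; rewrite -subr_eq0; apply/eqP/h3. Qed.

Lemma comm_mull (R : pzRingType) (d y b : R) :
  GRing.comm d b -> comm (d * y) b = d * comm y b.
Proof. by move=> db; rewrite /comm mulrBr !mulrA db. Qed.

Lemma bilinear_subl (F : fieldType) (G H V : lmodType F) (t : G -> H -> V)
  (x y : G) (z : H) :
  bilinear_map t -> t (x - y) z = t x z - t y z.
Proof.
by case=> tl _; rewrite addrC -scaleN1r tl scaleN1r addrC.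
Qed.

Lemma bilinear_subr (F : fieldType) (G H V : lmodType F) (t : G -> H -> V)
  (x : G) (y z : H) :
  bilinear_map t -> t x (y - z) = t x y - t x z.
Proof.
by case=> _ tr; rewrite addrC -scaleN1r tr scaleN1r addrC.
Qed.

Definition comm_prod_odd (R : pzRingType) (f : nat -> R) (k : nat) : R :=
  \prod_(0 <= j < k) comm (f (2 * j + 1)%N) (f (2 * j + 2)%N).

Definition comm_prod_even (R : pzRingType) (f : nat -> R) (k : nat) : R :=
  \prod_(1 <= j < k) comm (f (2 * j)%N) (f (2 * j + 1)%N).

Lemma comm_prod_oddS (R : pzRingType) (f : nat -> R) (k : nat) :
  comm_prod_odd f k.+1 = comm_prod_odd f k * comm (f (2 * k + 1)%N) (f (2 * k + 2)%N).
Proof. exact: big_nat_recr. Qed.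

Lemma comm_prod_evenS (R : pzRingType) (f : nat -> R) (k : nat) :
  comm_prod_even f k.+2 =
    comm_prod_even f k.+1 * comm (f (2 * k + 2)%N) (f (2 * k + 3)%N).
Proof.
rewrite /comm_prod_even big_nat_recr //=.
have -> : (2 * k.+1 = 2 * k + 2)%N by lia.
by rewrite -addnA.
Qed.

Section TensorCommutators.

Variables (F : fieldType) (G H T : algType F) (t : G -> H -> T).
Hypothesis t_bilinear : bilinear_map t.
Hypothesis t_mul : forall g g' h h', t g h * t g' h' = t (g * g') (h * h').

Lemma comm_tensor_l (x a : G) (y b : H) :
  GRing.comm y b -> comm (t x y) (t a b) = t (comm x a) (y * b).
Proof. by move=> yb; rewrite /comm !t_mul yb bilinear_subl. Qed.

Lemma comm_tensor_r (x a : G) (y b : H) :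
  GRing.comm x a -> comm (t x y) (t a b) = t (x * a) (comm y b).
Proof. by move=> xa; rewrite /comm !t_mul xa bilinear_subr. Qed.

Hypothesis G_comm_central : forall a b c : G, GRing.comm (comm a b) c.
Hypothesis H_comm_central : forall a b c : H, GRing.comm (comm a b) c.

Variables (g : nat -> G) (h : nat -> H).

Lemma comm_prod_odd_central (k : nat) (x : G) : GRing.comm (comm_prod_odd g k) x.
Proof. by apply/commr_sym/commr_prod => j _; apply/commr_sym. Qed.

Lemma comm_prod_even_central (k : nat) (y : H) : GRing.comm (comm_prod_even h k) y.
Proof. by apply/commr_sym/commr_prod => j _; apply/commr_sym. Qed.

Lemma lcomm_tensor_step_even (k : nat) (y : H) :
  comm (t (comm_prod_odd g k * g (2 * k + 1)%N) (comm_prod_even h k.+1))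
       (t (g (2 * k + 2)%N) y) =
  t (comm_prod_odd g k.+1) (comm_prod_even h k.+1 * y).
Proof.
rewrite comm_tensor_l; last exact: comm_prod_even_central.
by rewrite comm_mull ?comm_prod_oddS //; apply: comm_prod_odd_central.
Qed.

Lemma lcomm_tensor_step_odd (k : nat) :
  comm (t (comm_prod_odd g k.+1) (comm_prod_even h k.+1 * h (2 * k + 2)%N))
       (t (g (2 * k + 3)%N) (h (2 * k + 3)%N)) =
  t (comm_prod_odd g k.+1 * g (2 * k + 3)%N) (comm_prod_even h k.+2).
Proof.
rewrite comm_tensor_r; last exact: comm_prod_odd_central.
by rewrite comm_mull ?comm_prod_evenS //; apply: comm_prod_even_central.
Qed.

Lemma lcomm_tensor_even (k : nat) :
  lcomm (t (g 1%N) 1) [seq t (g i) (h i) | i <- iota 2 (2 * k)] =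
  t (comm_prod_odd g k * g (2 * k + 1)%N) (comm_prod_even h k.+1).
Proof.
elim: k => [|k IHk].
  by rewrite /comm_prod_odd /comm_prod_even !big_geq // mul1r.
have -> : (2 * k.+1 = (2 * k).+2)%N by lia.
rewrite !iota_rcons !map_rcons !lcomm_rcons IHk.
have -> : (2 + 2 * k = 2 * k + 2)%N by lia.
have -> : (2 + (2 * k).+1 = 2 * k + 3)%N by lia.
have -> : ((2 * k).+2 + 1 = 2 * k + 3)%N by lia.
by rewrite lcomm_tensor_step_even lcomm_tensor_step_odd.
Qed.

End TensorCommutators.

Theorem corollary2p3 (F : fieldType) (G H T : algType F) (t : G -> H -> T)
  (hT : is_tensor_algebra t)
  (hG : forall g1 g2 g3 : G, lcomm g1 [:: g2; g3] = 0)
  (hH : forall h1 h2 h3 : H, lcomm h1 [:: h2; h3] = 0)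
  (m' n' : nat) (hm : (1 <= m')%N) (hn : (1 <= n')%N)
  (g g' : nat -> G) (h h' : nat -> H) :
  let v := fun i : nat =>
    if (i == 1%N) || (i == (2 * m')%N) then t (g i) 1 else t (g i) (h i) in
  let w := fun j : nat => if j == 1%N then t (g' j) 1 else t (g' j) (h' j) in
  lcomm (v 1%N) [seq v i | i <- iota 2 (2 * m' - 1)] =
    t (\prod_(0 <= k < m') comm (g (2 * k + 1)%N) (g (2 * k + 2)%N))
      (\prod_(1 <= k < m') comm (h (2 * k)%N) (h (2 * k + 1)%N))
  /\
  lcomm (w 1%N) [seq w j | j <- iota 2 (2 * n')] =
    t ((\prod_(0 <= k < n') comm (g' (2 * k + 1)%N) (g' (2 * k + 2)%N))
          * g' (2 * n' + 1)%N)
      (\prod_(1 <= k < n'.+1) comm (h' (2 * k)%N) (h' (2 * k + 1)%N)).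
Proof.
move=> v w; case: hT => t_bilinear t_mul _ _.
have cG := comm_central_of_lcomm2 hG; have cH := comm_central_of_lcomm2 hH.
have eq_map_tensor (u : nat -> T) (x : nat -> G) (y : nat -> H) (n : nat) :
    {in iota 2 n, forall i, u i = t (x i) (y i)} ->
    [seq u i | i <- iota 2 n] = [seq t (x i) (y i) | i <- iota 2 n].
  by move=> u_eq; apply/eq_in_map.
split.
- case: m' hm @v => // k _ v.
  have -> : (2 * k.+1 - 1 = (2 * k).+1)%N by lia.
  rewrite iota_rcons map_rcons lcomm_rcons.
  rewrite (eq_map_tensor v g h) => [|i]; last first.
    by rewrite mem_iota /v => /andP[? ?]; rewrite ifN //; apply/norP; split; lia.
  have -> : v (2 + 2 * k)%N = t (g (2 * k + 2)%N) 1.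
    by rewrite /v (_ : (2 + 2 * k = 2 * k + 2)%N) ?ifT //; lia.
  by rewrite [v 1%N]/v lcomm_tensor_even // lcomm_tensor_step_even // mulr1.
- case: n' hn @w => // k _ w.
  rewrite (eq_map_tensor w g' h') => [|i]; last first.
    by rewrite mem_iota /w => /andP[? ?]; rewrite ifN //; lia.
  exact: lcomm_tensor_even.
Qed.
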